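(* Let $\ell\ge2$ and let $(\chi_1,\chi_2)$, $(\chi_3,\chi_4)$ be $\mathbf{ss}$-pairs. For $i\in[1,\ell-1]$ let $g_i=\begin{pmatrix}1&0\\ \epsilon\pi^i&1\end{pmatrix}$, $\mathrm B^i=\mathrm B(\mathfrak o_\ell)\cap g_i\mathrm B(\mathfrak o_\ell)g_i^{-1}$, and $(\chi_3,\chi_4)^{g_i}$ the character $x\mapsto(\chi_3,\chi_4)(g_i^{-1}xg_i)$ of $g_i\mathrm B(\mathfrak o_\ell)g_i^{-1}$. Then $\delta_i=\mathrm{Ind}_{\mathrm B^i}^{\mathrm B(\mathfrak o_\ell)}\big((\chi_1,\chi_2)\otimes(\chi_3,\chi_4)^{g_i}\big)$ is irreducible for every $i\in[1,\ell-1]$.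
   Context: Let $\mathcal O$ be a complete discrete valuation ring with maximal ideal $\mathfrak p=\pi\mathcal O$ and finite residue field of odd characteristic. Let $\mathfrak O=\mathcal O[\vartheta]$ be the unramified quadratic extension, with $\vartheta^2\in\mathcal O^\times$ a non-square, and Galois involution $x\mapsto x^\circ$, $\vartheta^\circ=-\vartheta$. Let $\mathfrak o_\ell=\mathcal O/\mathfrak p^\ell$, $\mathfrak O_\ell=\mathfrak O/\pi^\ell\mathfrak O$. $\mathrm G$ is $\mathrm{GL}_2$ (with $R_\ell=\mathfrak o_\ell$, $\epsilon=1$) or $\mathrm{GU}_2$ (with $\mathrm{GU}_2(\mathfrak o_\ell)=\{A\in\mathrm{GL}_2(\mathfrak O_\ell):A^\star A=I\}$, $(a_{ij})^\star=W(a_{ji}^\circ)W^{-1}$, $W=\begin{pmatrix}0&1\\1&0\end{pmatrix}$, $R_\ell=\mathfrak O_\ell$, $\epsilon=\vartheta$). $\mathrm B(\mathfrak o_\ell)$ is the group of upper triangular matrices in $\mathrm G(\mathfrak o_\ell)$. For characters $\chi,\chi'$ of $R_\ell^\times$, $(\chi,\chi')$ is the character $\begin{pmatrix}a&b\\0&c\end{pmatrix}\mapsto\chi(a)\chi'(c)$ of $\mathrm B(\mathfrak o_\ell)$; it is an $\mathbf{ss}$-pair if $\chi\chi'^{-1}$ is nontrivial on $1+\pi^{\ell-1}\mathfrak o_\ell$. *)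

From HB Require Import structures.
From mathcomp Require Import all_boot all_order all_algebra all_fingroup all_field all_character.
Set Implicit Arguments. Unset Strict Implicit. Unset Printing Implicit Defensive.
Import GRing.Theory Num.Theory.
Local Open Scope ring_scope.

(* o_l := O / p^l, presented intrinsically: a finite commutative local ring
   whose maximal ideal is generated by pi, with pi^(l-1) <> 0, pi^l = 0,
   and residue characteristic odd (2 is a unit). *)
Definition trunc_dvr_data (R : finComUnitRingType) (pi : R) (l : nat) : Prop :=
  [/\ pi ^+ l = 0, pi ^+ l.-1 != 0,
      (forall x : R, x \is a GRing.unit \/ exists y, x = pi * y)
    & (2%:R : R) \is a GRing.unit].

(* S = O_l = o_l[theta] with theta^2 = d a unit non-square (mod pi),
   iota : o_l -> O_l, sigma the Galois involution theta |-> -theta. *)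
Definition unram_quad_data (R : finComUnitRingType) (pi : R)
  (S : finComUnitRingType) (iota : R -> S) (sigma : S -> S) (theta : S) (d : R) : Prop :=
  [/\ theta ^+ 2 = iota d, d \is a GRing.unit,
      (forall x y : R, d - x ^+ 2 <> pi * y),
      (forall s : S, exists! ab : R * R, s = iota ab.1 + iota ab.2 * theta)
    & (forall a : R, sigma (iota a) = iota a) /\ sigma theta = - theta].

(* a character of the unit group R^x, given as a function on R that is a
   group homomorphism R^x -> C^x on the units *)
Definition unit_char (S : finComUnitRingType) (chi : S -> algC) : Prop :=
  chi 1 = 1 /\ forall x y : S, x \is a GRing.unit -> y \is a GRing.unit ->
    chi (x * y) = chi x * chi y.

Definition ss_pair (R S : finComUnitRingType) (iota : R -> S) (pi : R) (l : nat)
  (chi chi' : S -> algC) : Prop :=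
  exists y : R, chi (iota (1 + pi ^+ l.-1 * y)) != chi' (iota (1 + pi ^+ l.-1 * y)).

Definition Wmx (S : finComUnitRingType) : 'M[S]_2 := \matrix_(i, j) (i != j)%:R.

Definition mxstar (S : finComUnitRingType) (sigma : S -> S) (A : 'M[S]_2) : 'M[S]_2 :=
  Wmx S *m (map_mx sigma A)^T *m invmx (Wmx S).

Definition B_GL (R : finComUnitRingType) : {set {'GL_2[R]}} :=
  [set x : {'GL_2[R]} | GLval x ord_max ord0 == 0].

Definition B_GU (S : finComUnitRingType) (sigma : S -> S) : {set {'GL_2[S]}} :=
  [set x : {'GL_2[S]} | (GLval x ord_max ord0 == 0)
                        && (mxstar sigma (GLval x) *m GLval x == 1%:M)].

(* g_i = [[1,0],[eps pi^i, 1]] (determinant 1, hence in GL_2) *)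
Definition g_mx (R S : finComUnitRingType) (iota : R -> S) (pi : R) (eps : S) (i : nat)
  : 'M[S]_2 := \matrix_(r, c) (if r == c then 1 else
                                 if (r == ord_max) then eps * iota (pi ^+ i) else 0).

Definition g_el (R S : finComUnitRingType) (iota : R -> S) (pi : R) (eps : S) (i : nat)
  : {'GL_2[S]} := insubd (1%g : {'GL_2[S]}) (g_mx iota pi eps i : 'M[S]_(2.-1.+1)).

Definition pairchar (S : finComUnitRingType) (chi chi' : S -> algC) (A : 'M[S]_2) : algC :=
  chi (A ord0 ord0) * chi' (A ord_max ord_max).

Definition delta_irreducible (R S : finComUnitRingType) (iota : R -> S) (pi : R)
  (l : nat) (eps : S) (Bset : {set {'GL_2[S]}}) (chi1 chi2 chi3 chi4 : S -> algC) : Prop :=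
  forall i : nat, (1 <= i <= l.-1)%N ->
    let B := <<Bset>>%G in
    let g := g_el iota pi eps i in
    let Bi := (B :&: B :^ g^-1)%G in
    forall phi : 'CF(Bi),
      (forall x, x \in Bi ->
         phi x = pairchar chi1 chi2 (GLval x)
                 * pairchar chi3 chi4 (GLval (g^-1 * x * g)%g)) ->
      'Ind[B] phi \in irr B.

From HB Require Import structures.
From mathcomp Require Import all_boot all_order all_algebra all_fingroup all_field all_character.
From mathcomp Require Import ring zify.
Set Implicit Arguments. Unset Strict Implicit. Unset Printing Implicit Defensive.
Import GRing.Theory Num.Theory.
Local Open Scope ring_scope.

(* Mackey's criterion: if phi is a linear character of H <= G and, for every
   y in G \ H, phi and its y-conjugate differ somewhere on H :&: H :^ y^-1,
   then 'Ind[G] phi has norm 1, hence is irreducible.  Here H = B^i and, with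
   e = eps pi^i, phi [[a, b], [0, c]] = chi1 a chi2 c chi3 (a + b e) chi4 (c - e b).
   For y = [[al, be], [0, ga]] outside B^i write ga - al - be e = al D with
   pi^i D <> 0.  Take z = [[a, b], [0, a^-1]] with a = 1 + pi^i nu and b in
   eps o_l such that a^-1 - a = b e: then z is in B^i, z^y only multiplies b
   by 1 + D, and nu can be tuned so that s := b e D = pi^(l-1) y0; as e s = 0,
   z^y is in B^i too.  Then phi (z^y) / phi z = chi3 (1 + s) chi4 (1 - s) =
   (chi3 / chi4) (1 + s), which is not 1 because (chi3, chi4) is an ss-pair.  GL_2 and GU_2 are handled
   uniformly: all that is used of the ambient group is that it contains the g_i
   and these z, and that D can be taken in o_l. *)

Lemma sum_morph_eq0 (gT : finGroupType) (K : {group gT}) (R : idomainType)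
    (f : gT -> R) (z : gT) :
  {in K &, {morph f : x y / (x * y)%g >-> x * y}} -> z \in K -> f z != 1 ->
  \sum_(x in K) f x = 0.
Proof.
move=> fM Kz fz1.
have sumE : \sum_(x in K) f x = f z * \sum_(x in K) f x.
  rewrite mulr_sumr (reindex_inj (mulgI z)) /=.
  by apply: eq_big => [x | x Kx]; rewrite ?groupMl // fM // -(groupMl _ Kz).
apply/eqP; move/eqP: sumE; rewrite -subr_eq0 -{1}[\sum_(x in K) f x]mul1r -mulrBl.
by rewrite mulf_eq0 subr_eq0 eq_sym (negbTE fz1).
Qed.

Section InducedLinearChar.
Variables (gT : finGroupType) (G H : {group gT}) (phi : 'CF(H)).
Hypotheses (sHG : H \subset G) (phi1 : phi 1%g = 1)
  (phiM : {in H &, {morph phi : x y / (x * y)%g >-> x * y}}).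

Lemma morph_cfun_lin_char : phi \is a linear_char.
Proof.
pose r x : 'M[algC]_1 := (phi x)%:M.
have rR : mx_repr H r.
  by split=> [|x y Hx Hy]; rewrite /r ?phi1 // phiM // scalar_mxM.
have -> : phi = cfRepr (MxRepresentation rR).
  by apply/cfun_inP => x Hx; rewrite cfunE Hx /= mulr1n /r mxtrace_scalar.
by apply/andP; split; [exact: cfRepr_char | rewrite cfRepr1].
Qed.

Let phi_norm1 x : x \in H -> phi x * (phi x)^* = 1.
Proof. by move=> Hx; rewrite -normCK normC_lin_char ?expr1n ?morph_cfun_lin_char. Qed.

Let twisted_sum y := \sum_(x in H) phi x * (phi (x ^ y)%g)^*.

Let twisted_sum_in y : y \in H -> twisted_sum y = #|H|%:R.
Proof.
move=> Hy; rewrite /twisted_sum (eq_bigr (fun _ => 1)) ?sumr_const // => x Hx.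
by rewrite cfunJ // phi_norm1.
Qed.

Let twisted_sum_out y z :
  z \in H -> (z ^ y \in H)%g -> phi z != phi (z ^ y)%g -> twisted_sum y = 0.
Proof.
move=> Hz Hzy phi_z.
pose f x := phi x * (phi (x ^ y)%g)^*.
rewrite /twisted_sum (bigID (fun x => x ^ y \in H)%g) /= [X in _ + X]big1 ?addr0; last first.
  by move=> x /andP[_ nx]; rewrite (cfun0 _ nx) rmorph0 mulr0.
rewrite (eq_bigl [in (H :&: H :^ y^-1)%G]) => [|x]; last by rewrite !inE mem_conjgV.
apply: (@sum_morph_eq0 _ _ _ f z) => [a b | |].
- rewrite !inE !mem_conjgV => /andP[Ha Hay] /andP[Hb Hby].
  by rewrite /f conjMg (phiM Ha Hb) (phiM Hay Hby) rmorphM mulrACA.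
- by rewrite !inE mem_conjgV Hz.
- apply: contra phi_z => /eqP fz1.
  have : f z * phi (z ^ y)%g = phi (z ^ y)%g by rewrite fz1 mul1r.
  by rewrite /f -mulrA (mulrC _ (phi _)) phi_norm1 // mulr1 => ->.
Qed.

Lemma cfInd_lin_irr :
  (forall y, y \in G -> y \notin H ->
     exists2 z, z \in H & (z ^ y \in H)%g && (phi z != phi (z ^ y)%g)) ->
  'Ind[G] phi \in irr G.
Proof.
move=> sep; rewrite irrEchar cfInd_char ?lin_charW ?morph_cfun_lin_char //=.
rewrite -Frobenius_reciprocity cfdotE.
have -> : \sum_(x in H) phi x * ('Res[H] ('Ind[G] phi) x)^*
        = #|H|%:R^-1 * \sum_(y in G) twisted_sum y.
  rewrite /twisted_sum exchange_big mulr_sumr; apply: eq_bigr => x Hx.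
  rewrite cfResE // cfIndE // rmorphM /= fmorphV rmorph_nat rmorph_sum /=.
  by rewrite mulrCA mulr_sumr.
rewrite (bigID [in H]) /= [X in _ + X]big1 ?addr0 => [|y /andP[Gy nHy]]; last first.
  by have [z Hz /andP[]] := sep y Gy nHy; apply: twisted_sum_out.
rewrite (eq_bigl [in H]) => [|y]; last by rewrite andb_idl // => /(subsetP sHG).
rewrite (eq_bigr (fun _ => #|H|%:R)) => [|y /twisted_sum_in] //.
by rewrite sumr_const -mulr_natr; apply/eqP; field; apply: neq0CG.
Qed.

End InducedLinearChar.

Section Matrix2.
Variable S : comUnitRingType.

Definition mx2 (a b c d : S) : 'M[S]_2 :=
  \matrix_(i, j) if i == ord0 then (if j == ord0 then a else b)
                 else (if j == ord0 then c else d).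

Lemma mx2_00 a b c d : mx2 a b c d ord0 ord0 = a. Proof. by rewrite mxE. Qed.
Lemma mx2_01 a b c d : mx2 a b c d ord0 ord_max = b. Proof. by rewrite mxE. Qed.
Lemma mx2_10 a b c d : mx2 a b c d ord_max ord0 = c. Proof. by rewrite mxE. Qed.
Lemma mx2_11 a b c d : mx2 a b c d ord_max ord_max = d. Proof. by rewrite mxE. Qed.

Lemma ord2P (i : 'I_2) : i = ord0 \/ i = ord_max.
Proof. by case: i => [[|[|k]] Hk] //; [left|right]; apply: val_inj. Qed.

Lemma mx2_eta (M : 'M[S]_2) :
  M = mx2 (M ord0 ord0) (M ord0 ord_max) (M ord_max ord0) (M ord_max ord_max).
Proof.
by apply/matrixP => i j; rewrite mxE; case: (ord2P i) => ->; case: (ord2P j) => ->.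
Qed.

Lemma mx2_inj a b c d a' b' c' d' :
  mx2 a b c d = mx2 a' b' c' d' -> [/\ a = a', b = b', c = c' & d = d'].
Proof.
move=> e; split.
- by rewrite -(mx2_00 a b c d) e mx2_00.
- by rewrite -(mx2_01 a b c d) e mx2_01.
- by rewrite -(mx2_10 a b c d) e mx2_10.
- by rewrite -(mx2_11 a b c d) e mx2_11.
Qed.

Lemma mulmx2 a b c d a' b' c' d' :
  mx2 a b c d *m mx2 a' b' c' d' =
  mx2 (a * a' + b * c') (a * b' + b * d') (c * a' + d * c') (c * b' + d * d').
Proof.
apply/matrixP => i j; rewrite !mxE !big_ord_recl big_ord0 addr0 !mxE.
by case: (ord2P i) => ->; case: (ord2P j) => ->.
Qed.

Lemma mx2_1 : (1%:M : 'M[S]_2) = mx2 1 0 0 1.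
Proof.
by apply/matrixP => i j; rewrite !mxE; case: (ord2P i) => ->; case: (ord2P j) => ->.
Qed.

Lemma unitmx_mx2 a b c d : (mx2 a b c d \in unitmx) = (a * d - b * c \is a GRing.unit).
Proof.
rewrite unitmxE (expand_det_row _ ord0) !big_ord_recl big_ord0 addr0.
by rewrite /cofactor !det_mx11 !mxE /= expr0 expr1 !mul1r mulN1r mulrN.
Qed.

Lemma invmx_eq n (A B : 'M[S]_n) : A *m B = 1%:M -> invmx A = B.
Proof. by move=> AB; have [uA _] := mulmx1_unit AB; rewrite -[RHS](mulKmx uA) AB mulmx1. Qed.

Lemma upper_mx2 (M : 'M[S]_2) :
  M ord_max ord0 = 0 -> M = mx2 (M ord0 ord0) (M ord0 ord_max) 0 (M ord_max ord_max).
Proof. by move=> M10; rewrite {1}[M]mx2_eta M10. Qed.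

End Matrix2.

Section GL2.
Variable S : finComUnitRingType.

Definition mkGL (M : 'M[S]_2) : {'GL_2[S]} := insubd (1%g : {'GL_2[S]}) M.

Lemma mkGLK M : M \in unitmx -> GLval (mkGL M) = M.
Proof. by move=> uM; rewrite /mkGL insubdK. Qed.

Lemma GL_upper_unit (x : {'GL_2[S]}) a b c :
  GLval x = mx2 a b 0 c -> a \is a GRing.unit /\ c \is a GRing.unit.
Proof.
move=> xE; have := GL_unitmx x; rewrite -[val x]/(GLval x) xE unitmx_mx2.
by rewrite mulr0 subr0 unitrM => /andP.
Qed.

Lemma unit_char_neq0 (chi : S -> algC) x : unit_char chi -> x \is a GRing.unit -> chi x != 0.
Proof.
move=> [chi1 chiM] ux; apply/eqP => chix0.
have uxV : x^-1 \is a GRing.unit by rewrite unitrV.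
by have := chiM x x^-1 ux uxV; rewrite mulrV // chix0 mul0r chi1; apply/eqP/oner_neq0.
Qed.

Lemma pairchar_mx2 (chi chi' : S -> algC) a b c d :
  pairchar chi chi' (mx2 a b c d) = chi a * chi' d.
Proof. by rewrite /pairchar mx2_00 mx2_11. Qed.

Lemma pairchar_upperM (chi chi' : S -> algC) (x y : {'GL_2[S]}) :
  unit_char chi -> unit_char chi' ->
  GLval x ord_max ord0 = 0 -> GLval y ord_max ord0 = 0 ->
  pairchar chi chi' (GLval (x * y)%g) =
    pairchar chi chi' (GLval x) * pairchar chi chi' (GLval y).
Proof.
move=> [_ chiM] [_ chiM'] /upper_mx2 xE /upper_mx2 yE.
have [ux ux'] := GL_upper_unit xE; have [uy uy'] := GL_upper_unit yE.
rewrite GL_MxE xE yE mulmx2 !pairchar_mx2 mulr0 mul0r addr0 add0r chiM // chiM' //.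
by rewrite mulrACA.
Qed.

End GL2.

Section LowerUnipotent.
Variables (S : finComUnitRingType) (u : {'GL_2[S]}) (e : S).
Hypothesis uE : GLval u = mx2 1 0 e 1.

Lemma lower_unipotentV : GLval u^-1 = mx2 1 0 (- e) 1.
Proof.
rewrite GL_VxE uE; apply: invmx_eq.
by rewrite mulmx2 mx2_1; congr mx2; ring.
Qed.

Lemma lower_unipotent_conj (x : {'GL_2[S]}) a b c : GLval x = mx2 a b 0 c ->
  GLval (u^-1 * x * u)%g =
    mx2 (a + b * e) b (e * (c - a - b * e)) (c - e * b).
Proof.
by move=> xE; rewrite !GL_MxE lower_unipotentV uE xE !mulmx2; congr mx2; ring.
Qed.

End LowerUnipotent.

Lemma g_elE (R S : finComUnitRingType) (iota : R -> S) (pi : R) (eps : S) (i : nat) :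
  GLval (g_el iota pi eps i) = mx2 1 0 (eps * iota (pi ^+ i)) 1.
Proof.
have gE : g_mx iota pi eps i = mx2 1 0 (eps * iota (pi ^+ i)) 1.
  by apply/matrixP => r c; rewrite !mxE; case: (ord2P r) => ->; case: (ord2P c) => ->.
rewrite /g_el gE insubdK //.
by rewrite -topredE /= unitmx_mx2 mulr1 mul0r subr0 unitr1.
Qed.

Lemma mx2_upper_twist (S : comUnitRingType) (al be ga a b c e D : S) :
    c - a = b * e -> ga - al - be * e = al * D ->
  mx2 al be 0 ga *m mx2 a (b * (1 + D)) 0 c = mx2 a b 0 c *m mx2 al be 0 ga.
Proof.
move=> gap DE; rewrite !mulmx2; congr mx2; try ring.
apply/eqP; rewrite -subr_eq0; apply/eqP.
transitivity (b * (al * D - (ga - al - be * e)) + be * (c - a - b * e)); first by ring.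
by rewrite gap DE !subrr !mulr0 addr0.
Qed.

Lemma GL_conjg_mx (S : finComUnitRingType) (y z : {'GL_2[S]}) (W : 'M[S]_2) :
  GLval y *m W = GLval z *m GLval y -> GLval (z ^ y)%g = W.
Proof. by move=> yW; rewrite conjgE !GL_MxE GL_VxE -yW mulKmx ?GL_unitmx. Qed.

Lemma unit_char_twist_neq (S : finComUnitRingType) (chi chi' : S -> algC) (a c s : S) :
    unit_char chi -> unit_char chi' -> a \is a GRing.unit -> c \is a GRing.unit ->
    s * s = 0 -> chi (1 + s) != chi' (1 + s) ->
  chi c * chi' a != chi (c * (1 + s)) * chi' (a * (1 - s)).
Proof.
move=> chiU chi'U ua uc s2 chi_s; case: (chiU) => _ chiM; case: (chi'U) => _ chi'M.
have sDsB : (1 + s) * (1 - s) = 1 by rewrite mulrDl mul1r mulrBr mulr1 s2 subr0 subrK.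
have [us u_s] : 1 + s \is a GRing.unit /\ 1 - s \is a GRing.unit.
  have sBsD : (1 - s) * (1 + s) = 1 by rewrite mulrC.
  by split; apply/unitrP; [exists (1 - s) | exists (1 + s)]; rewrite sDsB sBsD.
have chi'_s : chi' (1 + s) * chi' (1 - s) = 1 by rewrite -chi'M // sDsB; case: chi'U.
apply: contra chi_s => /eqP chiE; apply/eqP.
have nz : chi c * chi' a != 0 by apply: mulf_neq0; apply: unit_char_neq0.
have {}chiE : chi (1 + s) * chi' (1 - s) = 1.
  by apply: (mulIf nz); rewrite mul1r [RHS]chiE chiM // chi'M //; ring.
by rewrite -[LHS]mulr1 -chi'_s mulrCA chiE mulr1.
Qed.

Section TruncatedDVR.
Variables (R : finComUnitRingType) (pi : R) (l : nat).
Hypothesis hR : trunc_dvr_data pi l.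

Lemma pi_expr_eq0 n : (l <= n)%N -> pi ^+ n = 0.
Proof. by case: hR => pil _ _ _ /subnK <-; rewrite exprD pil mulr0. Qed.

Lemma pi_exprD_eq0 m n : (l <= m + n)%N -> pi ^+ m * pi ^+ n = 0.
Proof. by rewrite -exprD; apply: pi_expr_eq0. Qed.

Lemma unit_1Dpi x : 1 + pi * x \is a GRing.unit.
Proof.
case: hR => pil _ unit_or_pi _; case: (unit_or_pi (1 + pi * x)) => // -[y xE].
have pi_inv : pi * (y - x) = 1 by rewrite mulrBr -xE addrK.
have pi_unit : pi \is a GRing.unit.
  by apply/unitrP; exists (y - x); rewrite mulrC pi_inv.
by have := unitrX l pi_unit; rewrite pil unitr0.
Qed.

Lemma unit_1DpiX k x : (0 < k)%N -> 1 + pi ^+ k * x \is a GRing.unit.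
Proof. by case: k => // k _; rewrite exprS -mulrA unit_1Dpi. Qed.

Lemma pi_factor x : x != 0 -> exists k u, u \is a GRing.unit /\ x = pi ^+ k * u.
Proof.
case: hR => _ _ unit_or_pi _ x_neq0.
suff [//|[x' xE]] : (exists k u, u \is a GRing.unit /\ x = pi ^+ k * u)
                    \/ exists x', x = pi ^+ l * x'.
  by move: x_neq0; rewrite xE pi_expr_eq0 // mul0r eqxx.
elim: l => [|n [|[x' ->]]]; [by right; exists x; rewrite mul1r | by left |].
case: (unit_or_pi x') => [ux'|[y ->]]; first by left; exists n, x'.
by right; exists y; rewrite exprSr mulrA.
Qed.

Lemma dvdr_pi_top x t : x != 0 -> exists nu, nu * x = pi ^+ l.-1 * t.
Proof.
move=> x_neq0; have [k [u [uu xE]]] := pi_factor x_neq0.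
have le_k_l1 : (k <= l.-1)%N.
  rewrite leqNgt; apply: contra x_neq0 => lt_l1_k.
  by rewrite xE pi_expr_eq0 ?mul0r //; move: lt_l1_k; case: (l).
exists (pi ^+ (l.-1 - k) * u^-1 * t).
rewrite xE -{2}(subnK le_k_l1) exprD -[RHS]mulr1 -(mulVr uu); ring.
Qed.

Lemma exists_twist_param i (d D t : R) :
    (0 < i)%N -> d \is a GRing.unit -> pi ^+ i * D != 0 ->
  exists a r, [/\ a \is a GRing.unit, a^-1 - a = d * r * pi ^+ i,
                  d * r * pi ^+ i * D = pi ^+ l.-1 * t,
                  a * pi ^+ l.-1 = pi ^+ l.-1 & a^-1 * pi ^+ l.-1 = pi ^+ l.-1].
Proof.
move=> i_gt0 ud nz; set P := pi ^+ l.-1.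
have u2 : (2%:R : R) \is a GRing.unit by case: hR.
have piP : pi ^+ i * P = 0 by apply: pi_exprD_eq0; case: (l) i_gt0 => /=; lia.
have [nu nuE] := dvdr_pi_top (- (t / 2%:R)) nz.
pose a := 1 + pi ^+ i * nu; have ua : a \is a GRing.unit by apply: unit_1DpiX.
pose r := - (d^-1 * a^-1 * nu * (2%:R + pi ^+ i * nu)).
have aP : a * P = P by rewrite mulrDl mul1r -mulrA (mulrC nu) mulrA piP mul0r addr0.
have aVP : a^-1 * P = P by rewrite -{1}aP mulKr.
have drE : d * r * pi ^+ i = - (a^-1 * (pi ^+ i * nu) * (2%:R + pi ^+ i * nu)).
  by rewrite /r -[RHS]mul1r -(mulrV ud); ring.
exists a, r; split=> //.
- rewrite drE -[X in _ - X](mulKr ua a) /a; ring.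
- transitivity (- a^-1 * (2%:R + pi ^+ i * nu) * (nu * (pi ^+ i * D))).
    by rewrite drE; ring.
  transitivity (a^-1 * P * (2%:R * (t / 2%:R)) + a^-1 * nu * (pi ^+ i * P) * (t / 2%:R)).
    by rewrite nuE -/P; ring.
  by rewrite piP mulr0 mul0r addr0 aVP [2%:R * _]mulrCA mulrV // mulr1.
Qed.

End TruncatedDVR.

Section UpperBorel.
Variables (R : finComUnitRingType) (pi : R) (l : nat).
Hypotheses (hl : (2 <= l)%N) (hR : trunc_dvr_data pi l).
Variables (S : finComUnitRingType) (iota : {rmorphism R -> S}) (eps : S) (d : R).
Hypotheses (eps2 : eps ^+ 2 = iota d) (d_unit : d \is a GRing.unit).
Variables (G : {group {'GL_2[S]}}) (B : {set {'GL_2[S]}}).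
Hypothesis memB : forall x, (x \in B) = (x \in G) && (GLval x ord_max ord0 == 0).
Hypothesis g_el_in : forall i, g_el iota pi eps i \in G.
Hypothesis upper_defect_real : forall y a b c r, y \in B -> GLval y = mx2 a b 0 c ->
  exists D, c - a - b * (eps * iota r) = a * iota D.
Definition twist (a r : R) := mkGL (mx2 (iota a) (eps * iota r) 0 (iota a^-1)).
Hypothesis twist_in : forall a r, a \is a GRing.unit -> twist a r \in G.
Variables (chi1 chi2 chi3 chi4 : S -> algC).
Hypotheses (chi1U : unit_char chi1) (chi2U : unit_char chi2)
  (chi3U : unit_char chi3) (chi4U : unit_char chi4)
  (ss34 : ss_pair iota pi l chi3 chi4).

Lemma B_group_set : group_set B.
Proof.
apply/group_setP; split=> [|x y]; first by rewrite memB group1 GL_1E mxE /=.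
rewrite !memB => /andP[Gx /eqP/upper_mx2 xE] /andP[Gy /eqP/upper_mx2 yE].
by rewrite groupM // GL_MxE xE yE mulmx2 mx2_10 mul0r mulr0 addr0 eqxx.
Qed.

Lemma mem_genB x : (x \in <<B>>%g) = (x \in B).
Proof. by rewrite (gen_set_id B_group_set). Qed.

Lemma B_mx2 y : y \in B -> exists a b c, GLval y = mx2 a b 0 c.
Proof. by rewrite memB => /andP[_ /eqP/upper_mx2 yE]; do 3!eexists; exact: yE. Qed.

Lemma twistE a r : a \is a GRing.unit ->
  GLval (twist a r) = mx2 (iota a) (eps * iota r) 0 (iota a^-1).
Proof.
move=> ua; rewrite mkGLK // unitmx_mx2 mulr0 subr0 -rmorphM mulrV //.
by rewrite rmorph1 unitr1.
Qed.

Lemma twist_B a r : a \is a GRing.unit -> twist a r \in B.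
Proof. by move=> ua; rewrite memB twist_in // twistE // mx2_10 eqxx. Qed.

Section Shift.
Variable i : nat.
Hypothesis i_gt0 : (0 < i)%N.
Local Notation g := (g_el iota pi eps i).
Local Notation e := (eps * iota (pi ^+ i)).
Local Notation Bi := (<<B>> :&: <<B>> :^ g^-1)%G.

Let conj_g (x : {'GL_2[S]}) (a b c : S) : GLval x = mx2 a b 0 c ->
  GLval (g^-1 * x * g)%g = mx2 (a + b * e) b (e * (c - a - b * e)) (c - e * b).
Proof. exact/lower_unipotent_conj/g_elE. Qed.

Lemma mem_Bi (x : {'GL_2[S]}) (a b c : S) : x \in B -> GLval x = mx2 a b 0 c ->
  (x \in Bi) = (e * (c - a - b * e) == 0).
Proof.
move=> Bx xE; have /andP[Gx _] : (x \in G) && (GLval x ord_max ord0 == 0) by rewrite -memB.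
by rewrite inE mem_conjgV !mem_genB Bx memB groupJ // conjgE mulgA (conj_g xE) mx2_10.
Qed.

Definition psi (x : {'GL_2[S]}) :=
  pairchar chi1 chi2 (GLval x) * pairchar chi3 chi4 (GLval (g^-1 * x * g)%g).

Lemma psi_mx2 (x : {'GL_2[S]}) (a b c : S) : GLval x = mx2 a b 0 c ->
  psi x = chi1 a * chi2 c * (chi3 (a + b * e) * chi4 (c - e * b)).
Proof. by move=> xE; rewrite /psi (conj_g xE) xE !pairchar_mx2. Qed.

Lemma psi1 : psi 1%g = 1.
Proof.
rewrite (@psi_mx2 _ 1 0 1) ?mul0r ?mulr0 ?addr0 ?subr0; last exact: mx2_1.
case: chi1U => -> _; case: chi2U => -> _; case: chi3U => -> _; case: chi4U => -> _.
by rewrite !mulr1.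
Qed.

Lemma psiM : {in Bi &, {morph psi : x y / (x * y)%g >-> x * y}}.
Proof.
move=> x y; rewrite !inE !mem_conjgV !mem_genB !conjgE !mulgA => /andP[Bx Bgx] /andP[By Bgy].
have upper z : z \in B -> GLval z ord_max ord0 = 0 by rewrite memB => /andP[_ /eqP].
rewrite /psi; have -> : (g^-1 * (x * y) * g = (g^-1 * x * g) * (g^-1 * y * g))%g.
  by rewrite !mulgA mulgK.
by rewrite (pairchar_upperM chi1U chi2U (upper _ Bx) (upper _ By))
   (pairchar_upperM chi3U chi4U (upper _ Bgx) (upper _ Bgy)) mulrACA.
Qed.

Lemma psi_twist_neq (z w : {'GL_2[S]}) (a b c D : S) :
    GLval z = mx2 a b 0 c -> GLval w = mx2 a (b * (1 + D)) 0 c -> c - a = b * e ->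
    let s := b * e * D in a * s = s -> c * s = s -> s * s = 0 ->
    chi3 (1 + s) != chi4 (1 + s) ->
  psi z != psi w.
Proof.
move=> zE wE gap s a_s c_s s2 chi34_s; have [ua uc] := GL_upper_unit zE.
rewrite (psi_mx2 zE) (psi_mx2 wE).
have aDbe : a + b * e = c by rewrite -gap addrC subrK.
have cBeb : c - e * b = a by rewrite mulrC -gap opprB addrC subrK.
have -> : a + b * (1 + D) * e = c * (1 + s).
  by rewrite [RHS]mulrDr mulr1 c_s /s -aDbe; ring.
have -> : c - e * (b * (1 + D)) = a * (1 - s).
  by rewrite [RHS]mulrBr mulr1 a_s /s -cBeb; ring.
rewrite aDbe cBeb (inj_eq (mulfI _)) ?mulf_neq0 ?unit_char_neq0 //.
exact: unit_char_twist_neq.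
Qed.

Lemma Bi_separates y : y \in B -> y \notin Bi ->
  exists2 z, z \in Bi & (z ^ y \in Bi)%g && (psi z != psi (z ^ y)%g).
Proof.
move=> By nBiy; have [al [be [ga yE]]] := B_mx2 By.
have [D0 D0E] := upper_defect_real (pi ^+ i) By yE.
have nz : pi ^+ i * D0 != 0.
  apply: contraNneq nBiy => piD0; rewrite (mem_Bi By yE) D0E.
  by rewrite mulrCA -mulrA -rmorphM piD0 rmorph0 !mulr0.
have [y0 chi34_y0] := ss34.
have [a [r [ua gapE DE aP aVP]]] := exists_twist_param hR y0 i_gt0 d_unit nz.
set P := pi ^+ l.-1 in DE aP aVP chi34_y0.
pose b := eps * iota r; pose z := twist a r.
have beE : b * e = iota (d * r * pi ^+ i) by rewrite !rmorphM /= -eps2 /b; ring.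
have gap : iota a^-1 - iota a = b * e by rewrite beE -gapE rmorphB.
have sE : b * e * iota D0 = iota (P * y0) by rewrite beE -rmorphM DE.
have zE : GLval z = mx2 (iota a) b 0 (iota a^-1) by apply: twistE.
have zyE : GLval (z ^ y)%g = mx2 (iota a) (b * (1 + iota D0)) 0 (iota a^-1).
  by apply: GL_conjg_mx; rewrite yE zE; apply: mx2_upper_twist gap D0E.
have Bz : z \in B by apply: twist_B.
have Bzy : (z ^ y)%g \in B by rewrite -mem_genB groupJ ?mem_genB.
exists z; first by rewrite (mem_Bi Bz zE) gap subrr mulr0.
apply/andP; split; last first.
  apply: (psi_twist_neq zE zyE gap); rewrite sE -?rmorphM ?mulrA ?aP ?aVP //.
    have PP : P * P = 0 by apply: (pi_exprD_eq0 hR); move: hl; case: (l) => //=; lia.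
    by rewrite [P * y0 * P]mulrAC PP !mul0r rmorph0.
  by rewrite -(rmorph1 iota) -rmorphD.
rewrite (mem_Bi Bzy zyE).
have -> : e * (iota a^-1 - iota a - b * (1 + iota D0) * e) = - (e * (b * e * iota D0)).
  transitivity (e * (iota a^-1 - iota a - b * e) - e * (b * e * iota D0)); first by ring.
  by rewrite gap subrr mulr0 sub0r.
rewrite sE -mulrA -rmorphM mulrA (pi_exprD_eq0 hR) ?mul0r ?rmorph0 ?mulr0 ?oppr0 //.
by move: i_gt0 hl; case: (l) => //=; lia.
Qed.

End Shift.

Theorem upper_delta_irreducible : delta_irreducible iota pi l eps B chi1 chi2 chi3 chi4.
Proof.
move=> i /andP[i_gt0 _] Bg g Bi phi phiE.
have phi_psi x : x \in Bi -> phi x = psi i x by apply: phiE.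
apply: cfInd_lin_irr => [||x y Bix Biy|y By nBiy]; first exact: subsetIl.
- by rewrite phi_psi ?group1 ?psi1.
- by rewrite !phi_psi ?groupM ?psiM.
have [|z Biz /andP[Bizy]] := Bi_separates i_gt0 _ nBiy; first by rewrite -mem_genB.
by exists z; rewrite // Bizy !phi_psi.
Qed.
End UpperBorel.

Theorem GL_delta_irreducible (R : finComUnitRingType) (pi : R) (l : nat)
    (hl : (2 <= l)%N) (hR : trunc_dvr_data pi l) (chi1 chi2 chi3 chi4 : R -> algC) :
  unit_char chi1 -> unit_char chi2 -> unit_char chi3 -> unit_char chi4 ->
  ss_pair idfun pi l chi3 chi4 ->
  delta_irreducible idfun pi l 1 (B_GL R) chi1 chi2 chi3 chi4.
Proof.
apply: (@upper_delta_irreducible _ _ _ hl hR _ idfun 1 1 (expr1n _ _) (unitr1 R) 'GL_2[R]%G)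
  => [x | i | y a b c r _ yE | a r _]; rewrite ?inE //.
have [ua _] := GL_upper_unit yE.
by exists (a^-1 * (c - a - b * (1 * r))); rewrite /= mulVKr.
Qed.

Section Unitary.
Variables (S : finComUnitRingType) (sigma : {rmorphism S -> S}).

Lemma Wmx_mx2 : Wmx S = mx2 0 1 1 0.
Proof.
by apply/matrixP => r c; rewrite !mxE; case: (ord2P r) => ->; case: (ord2P c) => ->.
Qed.

Lemma mxstar_mx2 a b c d :
  mxstar sigma (mx2 a b c d) = mx2 (sigma d) (sigma b) (sigma c) (sigma a).
Proof.
have WW : Wmx S *m Wmx S = 1%:M by rewrite Wmx_mx2 mulmx2 mx2_1; congr mx2; ring.
rewrite /mxstar (invmx_eq WW).
have -> : (map_mx sigma (mx2 a b c d))^T = mx2 (sigma a) (sigma c) (sigma b) (sigma d).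
  by apply/matrixP => r s; rewrite !mxE; case: (ord2P r) => ->; case: (ord2P s) => ->.
by rewrite Wmx_mx2 !mulmx2; congr mx2; ring.
Qed.

Lemma mxstarM (A B : 'M[S]_2) : mxstar sigma (A *m B) = mxstar sigma B *m mxstar sigma A.
Proof.
rewrite [A]mx2_eta [B]mx2_eta mulmx2 !mxstar_mx2 mulmx2 !rmorphD !rmorphM.
by congr mx2; ring.
Qed.

Definition unitary := [set x : {'GL_2[S]} | mxstar sigma (GLval x) *m GLval x == 1%:M].

Lemma unitary_group_set : group_set unitary.
Proof.
apply/group_setP; split=> [|x y].
  by rewrite inE GL_1E mulmx1 -[1]/(1%:M : 'M_2) mx2_1 mxstar_mx2 rmorph0 rmorph1.
rewrite !inE => /eqP xU /eqP yU.
by rewrite GL_MxE mxstarM mulmxA -(mulmxA _ _ (GLval x)) xU mulmx1 yU.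
Qed.

Canonical unitary_group := group unitary_group_set.

End Unitary.

Lemma unitary_upper_defect_fixed (S : finComUnitRingType) (sigma : {rmorphism S -> S})
    (y : {'GL_2[S]}) a b c e :
  y \in unitary sigma -> GLval y = mx2 a b 0 c -> sigma e = - e ->
  sigma (a^-1 * (c - a - b * e)) = a^-1 * (c - a - b * e).
Proof.
rewrite inE => /eqP yU yE sigma_e; have [ua _] := GL_upper_unit yE.
move: yU; rewrite yE mxstar_mx2 mulmx2 rmorph0 mx2_1 !(mulr0, mul0r, addr0, add0r).
case/mx2_inj=> sc_a sc_b _ sa_c.
have sigma_aV : sigma a^-1 = c.
  transitivity (sigma a^-1 * (sigma a * c)); first by rewrite sa_c mulr1.
  by rewrite mulrA -rmorphM mulVr // rmorph1 mul1r.
have sigma_c : sigma c = a^-1.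
  transitivity (sigma c * a * a^-1); first by rewrite mulrK.
  by rewrite sc_a mul1r.
rewrite sigma_c in sc_b; rewrite !rmorphM !rmorphB rmorphM /= sigma_aV sigma_c sigma_e.
transitivity (a^-1 * (c - a - b * e) - (sigma a * c - 1) + (a^-1 * a - 1)
              + e * (a^-1 * b + sigma b * c)); first by ring.
by rewrite sa_c mulVr // sc_b !subrr mulr0 !addr0 subr0.
Qed.

Section UnitaryCase.
Variables (R : finComUnitRingType) (pi : R) (S : finComUnitRingType)
  (iota : {rmorphism R -> S}) (sigma : {rmorphism S -> S}) (theta : S) (d : R).
Hypotheses (quad : unram_quad_data pi iota sigma theta d)
  (two_unit : (2%:R : R) \is a GRing.unit).

Lemma sigma_iota r : sigma (iota r) = iota r.
Proof. by case: quad => _ _ _ _ []. Qed.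

Lemma sigma_theta_iota r : sigma (theta * iota r) = - (theta * iota r).
Proof.
by case: quad => _ _ _ _ [_ sigma_theta]; rewrite rmorphM sigma_iota sigma_theta mulNr.
Qed.

Lemma sigma_fixed_iota s : sigma s = s -> exists r, s = iota r.
Proof.
case: quad => _ _ _ coords _ sigma_s; have [[x y] [/= sE _]] := coords s; exists x.
have two_unitS : (2%:R : S) \is a GRing.unit by rewrite -(rmorph_nat iota) rmorph_unit.
have : 2%:R * (iota y * theta) = 0.
  transitivity (s - sigma s); last by rewrite sigma_s subrr.
  by rewrite sE rmorphD (mulrC (iota y)) sigma_theta_iota sigma_iota; ring.
by rewrite sE => /(canRL (mulKr two_unitS)); rewrite mulr0 => ->; rewrite addr0.
Qed.

Lemma g_el_unitary i : g_el iota pi theta i \in unitary sigma.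
Proof.
rewrite inE g_elE mxstar_mx2 mulmx2 sigma_theta_iota !rmorph0 rmorph1 mx2_1.
by apply/eqP; congr mx2; ring.
Qed.

Lemma twist_unitary a r : a \is a GRing.unit -> twist iota theta a r \in unitary sigma.
Proof.
move=> ua; have aVa : iota a^-1 * iota a = 1 by rewrite -rmorphM mulVr ?rmorph1.
rewrite inE twistE // mxstar_mx2 mulmx2 !sigma_iota sigma_theta_iota rmorph0 mx2_1.
by apply/eqP; congr mx2; rewrite ?(mulrC (iota a)) ?aVa; ring.
Qed.

End UnitaryCase.

Theorem GU_delta_irreducible (R : finComUnitRingType) (pi : R) (l : nat)
    (hl : (2 <= l)%N) (hR : trunc_dvr_data pi l) (S : finComUnitRingType)
    (iota : {rmorphism R -> S}) (sigma : {rmorphism S -> S}) (theta : S) (d : R)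
    (chi1 chi2 chi3 chi4 : S -> algC) :
  unram_quad_data pi iota sigma theta d ->
  unit_char chi1 -> unit_char chi2 -> unit_char chi3 -> unit_char chi4 ->
  ss_pair iota pi l chi3 chi4 ->
  delta_irreducible iota pi l theta (B_GU sigma) chi1 chi2 chi3 chi4.
Proof.
move=> quad; have two_unit : (2%:R : R) \is a GRing.unit by case: hR.
have [theta2 d_unit _ _ _] := quad.
apply: (upper_delta_irreducible hl hR theta2 d_unit (G := unitary_group sigma))
  => [x | i | y a b c r By yE | a r ua]; first by rewrite !inE andbC.
- exact: (g_el_unitary quad i).
- have [ua _] := GL_upper_unit yE.
  have yU : y \in unitary sigma by move: By; rewrite !inE => /andP[].
  have [D DE] := sigma_fixed_iota quad two_unit
    (unitary_upper_defect_fixed yU yE (sigma_theta_iota quad r)).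
  by exists D; rewrite -DE mulVKr.
- exact: (twist_unitary quad).
Qed.

Theorem lemma8p1 (R : finComUnitRingType) (pi : R) (l : nat)
  (hl : (2 <= l)%N) (hR : trunc_dvr_data pi l) :
  (* G = GL_2 : R_l = o_l, eps = 1 *)
  (forall chi1 chi2 chi3 chi4 : R -> algC,
     unit_char chi1 -> unit_char chi2 -> unit_char chi3 -> unit_char chi4 ->
     ss_pair idfun pi l chi1 chi2 -> ss_pair idfun pi l chi3 chi4 ->
     delta_irreducible idfun pi l 1 (B_GL R) chi1 chi2 chi3 chi4)
  /\
  (* G = GU_2 : R_l = O_l, eps = theta *)
  (forall (S : finComUnitRingType) (iota : {rmorphism R -> S})
          (sigma : {rmorphism S -> S}) (theta : S) (d : R),
     unram_quad_data pi iota sigma theta d ->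
     forall chi1 chi2 chi3 chi4 : S -> algC,
     unit_char chi1 -> unit_char chi2 -> unit_char chi3 -> unit_char chi4 ->
     ss_pair iota pi l chi1 chi2 -> ss_pair iota pi l chi3 chi4 ->
     delta_irreducible iota pi l theta (B_GU sigma) chi1 chi2 chi3 chi4).
Proof.
split=> [chi1 chi2 chi3 chi4 c1 c2 c3 c4 _ |
         S iota sigma theta d quad chi1 chi2 chi3 chi4 c1 c2 c3 c4 _].
- exact: (GL_delta_irreducible hl hR c1 c2 c3 c4).
- exact: (GU_delta_irreducible hl hR quad c1 c2 c3 c4).
Qed.
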